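(* Let $d_{\mathrm{in}}, d_{\mathrm{out}} \ge 1$, let $\mathbf{U}^{(t)} \in \mathbb{R}^{d_{\mathrm{out}}\times d_{\mathrm{in}}}$ be a fixed matrix (the task vector of task $t$ for a given module), and let $(\mathbf{x}, \mathbf{g}_{\mathbf{y}})$ be a random pair with $\mathbf{x}\in\mathbb{R}^{d_{\mathrm{in}}}$ and $\mathbf{g}_{\mathbf{y}}\in\mathbb{R}^{d_{\mathrm{out}}}$ whose moments below exist. Define the per-sample descent matrix $\mathbf{D}^{(t)} = \mathbf{g}_{\mathbf{y}}\mathbf{x}^{\top}$. Suppose the following three conditions (Assumption 1) hold: (1) $\mathbb{E}[\mathbf{D}^{(t)}] = \rho\,\mathbf{U}^{(t)}$ for some weight decay coefficient $\rho>0$; (2) with $\overline{\mathbf{D}}^{(t)} = \mathbb{E}[\mathbf{D}^{(t)}]$, $\mathbf{C}_t = \mathbb{E}\big[(\mathbf{D}^{(t)}-\overline{\mathbf{D}}^{(t)})^{\top}(\mathbf{D}^{(t)}-\overline{\mathbf{D}}^{(t)})\big]$ and $\mathbf{M}_t = (\overline{\mathbf{D}}^{(t)})^{\top}\overline{\mathbf{D}}^{(t)}$, one has $\cos_F(\mathbf{C}_t,\mathbf{M}_t) > \alpha_t$ for some constant $\alpha_t\in(0,1]$; (3) $\mathbb{E}\big[\|\mathbf{g}_{\mathbf{y}}\|_2^2\,\mathbf{x}\mathbf{x}^{\top}\big] = \mathbb{E}\big[\|\mathbf{g}_{\mathbf{y}}\|_2^2\big]\,\mathbb{E}[\mathbf{x}\mathbf{x}^{\top}]$.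 Then $$\cos_F\!\left(\mathbb{E}[\mathbf{x}\mathbf{x}^{\top}],\ (\mathbf{U}^{(t)})^{\top}\mathbf{U}^{(t)}\right) > \alpha_t .$$
   Context: For matrices $\mathbf{A},\mathbf{B}$ of the same shape, the Frobenius cosine similarity is $\cos_F(\mathbf{A},\mathbf{B}) = \operatorname{Tr}(\mathbf{A}^{\top}\mathbf{B})/(\|\mathbf{A}\|_F\|\mathbf{B}\|_F)$. Interpretation: $\mathbf{U}^{(t)} = \mathbf{W}^{(t)}-\mathbf{W}_{\mathrm{pre}}$ is the difference between fine-tuned and pretrained weights of a linear module, $\mathbf{x}$ is an input activation to the module, $\mathbf{y}=\mathbf{U}^{(t)}\mathbf{x}$ is the residual output, and $\mathbf{g}_{\mathbf{y}} = -\nabla_{\mathbf{y}}\ell$ is the backpropagated negative gradient of the fine-tuning loss $\ell$; the SGD update with $L_2$ regularization is $\delta(\mathbf{U}^{(t)}) = \eta(\mathbf{D}^{(t)} - \rho\mathbf{U}^{(t)})$, so condition (1) is equivalent to $\mathbb{E}[\delta(\mathbf{U}^{(t)})]=\mathbf{0}$. All expectations are with respect to the randomness of mini-batch sampling, conditioned on the fine-tuned checkpoint. *)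

From HB Require Import structures.
From mathcomp Require Import all_boot all_order all_algebra.
From mathcomp Require Import all_classical all_reals all_analysis.
Set Implicit Arguments. Unset Strict Implicit. Unset Printing Implicit Defensive.
Import Order.TTheory GRing.Theory Num.Theory.
Local Open Scope ring_scope.

Definition frob_norm (R : realType) (m n : nat) (A : 'M[R]_(m, n)) : R :=
  Num.sqrt (\tr (A^T *m A)).

Definition frob_cos (R : realType) (m n : nat) (A B : 'M[R]_(m, n)) : R :=
  \tr (A^T *m B) / (frob_norm A * frob_norm B).

Definition sqnorm (R : realType) (n : nat) (v : 'cV[R]_n) : R :=
  \sum_(i < n) v i ord0 ^+ 2.

(* Real-valued expectation of a real random variable (used under integrability). *)
Definition Ereal d (T : measurableType d) (R : realType) (P : probability T R)
  (X : T -> R) : R := fine ('E_P[X])%E.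

Definition Emx d (T : measurableType d) (R : realType) (P : probability T R)
  (m n : nat) (X : T -> 'M[R]_(m, n)) : 'M[R]_(m, n) :=
  \matrix_(i, j) Ereal P (fun w => X w i j).

Definition rv_integrable d (T : measurableType d) (R : realType)
  (P : probability T R) (X : T -> R) : Prop :=
  P.-integrable setT (fun w => (X w)%:E).

Definition mx_integrable d (T : measurableType d) (R : realType)
  (P : probability T R) (m n : nat) (X : T -> 'M[R]_(m, n)) : Prop :=
  forall i j, rv_integrable P (fun w => X w i j).

From HB Require Import structures.
From mathcomp Require Import all_boot all_order all_algebra.
From mathcomp Require Import all_classical all_reals all_analysis.
From mathcomp Require Import ring lra.
Import Order.TTheory GRing.Theory Num.Theory.
Local Open Scope ring_scope.

(* Since D = g x^T, we have D^T D = |g|^2 x x^T, so by (3) E[D^T D] is the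
   positive multiple E|g|^2 of Sigma.  The bias-variance decomposition gives
   E[D^T D] = C + M, and M = rho^2 U^T U by (1).  Adding M to C moves it towards
   M: when <C, M> > 0, Cauchy-Schwarz yields cos(C + M, M) >= cos(C, M).  As the
   Frobenius cosine is invariant under positive rescaling of either argument,
   cos(Sigma, U^T U) = cos(C + M, M) > alpha. *)

Section FrobeniusCosine.
Set Implicit Arguments. Unset Strict Implicit.
Variables (R : realType) (m n : nat).
Implicit Types (A B : 'M[R]_(m, n)) (a b : R).

Definition frob_dot A B : R := \tr (A^T *m B).

Lemma frob_dotC A B : frob_dot A B = frob_dot B A.
Proof. by rewrite /frob_dot -mxtrace_tr trmx_mul trmxK. Qed.

Lemma frob_dotDl A B C : frob_dot (A + B) C = frob_dot A C + frob_dot B C.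
Proof. by rewrite /frob_dot linearD /= mulmxDl mxtraceD. Qed.

Lemma frob_dotZl a A B : frob_dot (a *: A) B = a * frob_dot A B.
Proof. by rewrite /frob_dot linearZ /= -scalemxAl mxtraceZ. Qed.

Lemma frob_dotDr A B C : frob_dot A (B + C) = frob_dot A B + frob_dot A C.
Proof. by rewrite frob_dotC frob_dotDl !(frob_dotC A). Qed.

Lemma frob_dotZr a A B : frob_dot A (a *: B) = a * frob_dot A B.
Proof. by rewrite frob_dotC frob_dotZl frob_dotC. Qed.

Lemma frob_dot_ge0 A : 0 <= frob_dot A A.
Proof.
apply: sumr_ge0 => i _; rewrite !mxE.
by apply: sumr_ge0 => k _; rewrite !mxE -expr2 sqr_ge0.
Qed.

Lemma frob_normE A : frob_norm A = Num.sqrt (frob_dot A A).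
Proof. by []. Qed.

Lemma frob_CauchySchwarz A B : frob_dot A B ^+ 2 <= frob_dot A A * frob_dot B B.
Proof.
have expand u v : frob_dot (u *: A + v *: B) (u *: A + v *: B)
    = u ^+ 2 * frob_dot A A + 2 * u * v * frob_dot A B + v ^+ 2 * frob_dot B B.
  rewrite !frob_dotDl !frob_dotDr !frob_dotZl !frob_dotZr (frob_dotC B A).
  by rewrite !expr2 mulr2n; lra.
set s := frob_dot A A; set p := frob_dot A B; set q := frob_dot B B.
have H u v : 0 <= u ^+ 2 * s + 2 * u * v * p + v ^+ 2 * q.
  by rewrite -expand frob_dot_ge0.
have s0 : 0 <= s := frob_dot_ge0 A; have q0 : 0 <= q := frob_dot_ge0 B.
have [qpos|] := ltP 0 q; first by have := H q (- p); nra.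
have [spos|] := ltP 0 s; first by have := H (- p) s; nra.
by have := H 1 1; have := H 1 (- 1); nra.
Qed.

Lemma frob_cosE A B :
  frob_cos A B = frob_dot A B / (Num.sqrt (frob_dot A A) * Num.sqrt (frob_dot B B)).
Proof. by []. Qed.

Lemma frob_cos0l B : frob_cos 0 B = 0.
Proof. by rewrite /frob_cos trmx0 mul0mx mxtrace0 mul0r. Qed.

Lemma frob_cos_gt0 A B : 0 < frob_cos A B -> 0 < frob_dot A B.
Proof.
rewrite frob_cosE ltNge => /negP cos_gt0; rewrite ltNge; apply/negP => dot_le0.
by apply: cos_gt0; rewrite mulr_le0_ge0 // invr_ge0 mulr_ge0 ?sqrtr_ge0.
Qed.

Lemma frob_normZ a A : frob_norm (a *: A) = `|a| * frob_norm A.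
Proof.
by rewrite !frob_normE frob_dotZl frob_dotZr mulrA -expr2 sqrtrM ?sqr_ge0 // sqrtr_sqr.
Qed.

Lemma frob_cosZ a b A B : 0 < a -> 0 < b -> frob_cos (a *: A) (b *: B) = frob_cos A B.
Proof.
move=> a_gt0 b_gt0; rewrite /frob_cos !frob_normZ !gtr0_norm //.
rewrite -!/(frob_dot _ _) frob_dotZl frob_dotZr !invfM.
set u := (frob_norm A)^-1; set v := (frob_norm B)^-1.
by field; rewrite !gt_eqF.
Qed.

Lemma frob_cos_le_add A B : 0 < frob_dot A B -> frob_cos A B <= frob_cos (A + B) B.
Proof.
rewrite !frob_cosE !frob_dotDl !frob_dotDr (frob_dotC B A).
set s := frob_dot A A; set p := frob_dot A B; set q := frob_dot B B => p_gt0.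
have cs : p ^+ 2 <= s * q := frob_CauchySchwarz A B.
have s0 : 0 <= s := frob_dot_ge0 A; have q0 : 0 <= q := frob_dot_ge0 B.
have s_gt0 : 0 < s by nra.
have q_gt0 : 0 < q by nra.
have X_gt0 : 0 < s + p + (p + q) by lra.
have key : p * Num.sqrt (s + p + (p + q)) <= (p + q) * Num.sqrt s.
  have p0 := ltW p_gt0; have X0 := ltW X_gt0.
  rewrite -ler_sqr ?nnegrE ?mulr_ge0 ?sqrtr_ge0 ?addr_ge0 //.
  by rewrite !exprMn !sqr_sqrtr //; nra.
rewrite ler_pdivrMr ?mulr_gt0 ?sqrtr_gt0 // mulrAC ler_pdivlMr ?mulr_gt0 ?sqrtr_gt0 //.
by rewrite !mulrA ler_pM2r ?sqrtr_gt0.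
Qed.

End FrobeniusCosine.

Section Expectation.
Set Implicit Arguments. Unset Strict Implicit.
Context d (T : measurableType d) (R : realType) (P : probability T R).
Implicit Types (X Y : T -> R) (c : R).

Lemma Ereal_Rintegral X : Ereal P X = Rintegral P setT X.
Proof. by rewrite /Ereal unlock. Qed.

Lemma rv_integrableD X Y : rv_integrable P X -> rv_integrable P Y ->
  rv_integrable P (fun w => X w + Y w).
Proof. exact: integrableD. Qed.

Lemma ErealD X Y : rv_integrable P X -> rv_integrable P Y ->
  Ereal P (fun w => X w + Y w) = Ereal P X + Ereal P Y.
Proof. by move=> iX iY; rewrite !Ereal_Rintegral RintegralD. Qed.

Lemma rv_integrableZ c X : rv_integrable P X -> rv_integrable P (fun w => c * X w).
Proof. exact: integrableZl. Qed.

Lemma ErealZ c X : rv_integrable P X -> Ereal P (fun w => c * X w) = c * Ereal P X.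
Proof. by move=> iX; rewrite !Ereal_Rintegral RintegralZl. Qed.

Lemma rv_integrable_cst c : rv_integrable P (fun _ => c).
Proof. exact: finite_measure_integrable_cst. Qed.

Lemma Ereal_cst c : Ereal P (fun _ => c) = c.
Proof.
rewrite Ereal_Rintegral Rintegral_cst //.
by rewrite -[X in _ * X]/(fine (P setT)) probability_setT mulr1.
Qed.

Lemma rv_integrable_sum (I : Type) (s : seq I) (F : I -> T -> R) :
  (forall i, rv_integrable P (F i)) -> rv_integrable P (fun w => \sum_(i <- s) F i w).
Proof.
move=> iF; elim: s => [|i s IHs].
  by under eq_fun do rewrite big_nil; exact: rv_integrable_cst.
by under eq_fun do rewrite big_cons; exact: rv_integrableD.
Qed.

Lemma Ereal_sum (I : Type) (s : seq I) (F : I -> T -> R) :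
  (forall i, rv_integrable P (F i)) ->
  Ereal P (fun w => \sum_(i <- s) F i w) = \sum_(i <- s) Ereal P (F i).
Proof.
move=> iF; elim: s => [|i s IHs].
  by under eq_fun do rewrite big_nil; rewrite big_nil Ereal_cst.
under eq_fun do rewrite big_cons.
by rewrite big_cons ErealD ?IHs //; exact: rv_integrable_sum.
Qed.

Lemma Ereal_ge0 X : (forall w, 0 <= X w) -> 0 <= Ereal P X.
Proof. by move=> X_ge0; rewrite Ereal_Rintegral; apply: Rintegral_ge0. Qed.

Lemma mx_integrableD m n (X Y : T -> 'M[R]_(m, n)) :
  mx_integrable P X -> mx_integrable P Y -> mx_integrable P (fun w => X w + Y w).
Proof. by move=> iX iY i j; under eq_fun do rewrite mxE; exact: rv_integrableD. Qed.

Lemma EmxD m n (X Y : T -> 'M[R]_(m, n)) : mx_integrable P X -> mx_integrable P Y ->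
  Emx P (fun w => X w + Y w) = Emx P X + Emx P Y.
Proof.
move=> iX iY; apply/matrixP => i j; rewrite !mxE.
by under eq_fun do rewrite mxE; exact: ErealD.
Qed.

Lemma mx_integrable_cst m n (A : 'M[R]_(m, n)) : mx_integrable P (fun _ => A).
Proof. by move=> i j; exact: rv_integrable_cst. Qed.

Lemma Emx_cst m n (A : 'M[R]_(m, n)) : Emx P (fun _ => A) = A.
Proof. by apply/matrixP => i j; rewrite mxE Ereal_cst. Qed.

Lemma mx_integrable_tr m n (X : T -> 'M[R]_(m, n)) :
  mx_integrable P X -> mx_integrable P (fun w => (X w)^T).
Proof. by move=> iX i j; under eq_fun do rewrite mxE; exact: iX. Qed.

Lemma Emx_tr m n (X : T -> 'M[R]_(m, n)) : Emx P (fun w => (X w)^T) = (Emx P X)^T.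
Proof. by apply/matrixP => i j; rewrite !mxE; under eq_fun do rewrite mxE. Qed.

Lemma mx_integrable_mull p m n (A : 'M[R]_(p, m)) (X : T -> 'M[R]_(m, n)) :
  mx_integrable P X -> mx_integrable P (fun w => A *m X w).
Proof.
move=> iX i j; under eq_fun do rewrite mxE.
by apply: rv_integrable_sum => k; exact: rv_integrableZ.
Qed.

Lemma Emx_mull p m n (A : 'M[R]_(p, m)) (X : T -> 'M[R]_(m, n)) :
  mx_integrable P X -> Emx P (fun w => A *m X w) = A *m Emx P X.
Proof.
move=> iX; apply/matrixP => i j; rewrite !mxE; under eq_fun do rewrite mxE.
rewrite Ereal_sum => [|k]; last exact: rv_integrableZ.
by apply: eq_bigr => k _; rewrite ErealZ // mxE.
Qed.

Lemma Emx_trmx_mul m n (X : T -> 'M[R]_(m, n)) :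
  mx_integrable P X ->
  mx_integrable P (fun w => (X w - Emx P X)^T *m (X w - Emx P X)) ->
  Emx P (fun w => (X w)^T *m X w)
    = Emx P (fun w => (X w - Emx P X)^T *m (X w - Emx P X)) + (Emx P X)^T *m Emx P X.
Proof.
set B := Emx P X => iX iV.
have -> : (fun w => (X w)^T *m X w) = (fun w =>
    ((X w - B)^T *m (X w - B) + B^T *m X w) + ((B^T *m X w)^T + - (B^T *m B))).
  apply/funext => w; rewrite trmx_mul trmxK [(X w - B)^T]linearB /= mulmxBl !mulmxBr.
  set a := (X w)^T *m X w; set b := (X w)^T *m B; set c := B^T *m X w.
  by apply/matrixP => i j; rewrite !mxE; ring.
have iBX : mx_integrable P (fun w => B^T *m X w) by exact: mx_integrable_mull.
have iBXt := mx_integrable_tr iBX; have iM := mx_integrable_cst (- (B^T *m B)).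
rewrite !EmxD ?Emx_tr ?Emx_mull ?Emx_cst ?trmx_mul ?trmxK ?subrr ?addr0 //.
all: exact: mx_integrableD.
Qed.

End Expectation.

Lemma trmx_outer_mul (R : realType) p q (u : 'cV[R]_p) (v : 'cV[R]_q) :
  (u *m v^T)^T *m (u *m v^T) = sqnorm u *: (v *m v^T).
Proof.
have utu : u^T *m u = (sqnorm u)%:M.
  apply/matrixP => i j; rewrite !ord1 !mxE eqxx mulr1n.
  by apply: eq_bigr => k _; rewrite !mxE expr2.
by rewrite trmx_mul trmxK mulmxA -(mulmxA v) utu mul_mx_scalar scalemxAl.
Qed.

Theorem theorem1 (d : measure_display) (T : measurableType d) (R : realType)
  (P : probability T R) (din dout : nat) (hin : (0 < din)%N) (hout : (0 < dout)%N)
  (U : 'M[R]_(dout, din)) (x : T -> 'cV[R]_din) (g : T -> 'cV[R]_dout)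
  (rho alpha : R) :
  let D := fun w => g w *m (x w)^T in
  let Dbar := Emx P D in
  let C := Emx P (fun w => (D w - Dbar)^T *m (D w - Dbar)) in
  let M := Dbar^T *m Dbar in
  let Sigma := Emx P (fun w => x w *m (x w)^T) in
  (* existence of the moments involved *)
  mx_integrable P D ->
  mx_integrable P (fun w => (D w - Dbar)^T *m (D w - Dbar)) ->
  mx_integrable P (fun w => x w *m (x w)^T) ->
  mx_integrable P (fun w => sqnorm (g w) *: (x w *m (x w)^T)) ->
  rv_integrable P (fun w => sqnorm (g w)) ->
  (* Assumption 1 *)
  0 < rho -> Dbar = rho *: U ->
  0 < alpha -> alpha <= 1 -> alpha < frob_cos C M ->
  Emx P (fun w => sqnorm (g w) *: (x w *m (x w)^T))
    = Ereal P (fun w => sqnorm (g w)) *: Sigma ->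
  alpha < frob_cos Sigma (U^T *m U).
Proof.
move=> D Dbar C M Sigma iD iV _ _ _ rho_gt0 Dbar_eq alpha_gt0 _ cos_CM moment_split.
set c := Ereal P (fun w => sqnorm (g w)) in moment_split.
have second_moment : c *: Sigma = C + M.
  rewrite -moment_split -(Emx_trmx_mul iD iV).
  by under eq_fun do rewrite -trmx_outer_mul.
have M_eq : M = rho ^+ 2 *: (U^T *m U).
  by rewrite /M Dbar_eq !linearZ /= -scalemxAl scalerA expr2.
have cos_sum : alpha < frob_cos (C + M) M.
  exact: lt_le_trans cos_CM (frob_cos_le_add (frob_cos_gt0 (lt_trans alpha_gt0 cos_CM))).
have c_gt0 : 0 < c.
  have c_ge0 : 0 <= c.
    by apply: Ereal_ge0 => w; apply: sumr_ge0 => i _; exact: sqr_ge0.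
  rewrite lt_def c_ge0 andbT; apply: contraTneq cos_sum => c_eq0.
  by rewrite -second_moment c_eq0 scale0r frob_cos0l -leNgt ltW.
by rewrite -(frob_cosZ Sigma (U^T *m U) c_gt0 (exprn_gt0 2 rho_gt0)) second_moment -M_eq.
Qed.
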